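(* Let $T$ be a tree with maximum degree $3$ on $n \geq 7$ vertices. Then $GRM_{-2}(T) \geq -\left\lfloor \frac{n-1}{3} \right\rfloor - 2$.
   Context: For a graph $G=(V,E)$ and a real $\lambda$, the general reduced second Zagreb index is $GRM_\lambda(G) = \sum_{uv \in E} (\deg(u)+\lambda)(\deg(v)+\lambda)$, where $\deg(v)$ is the degree of $v$. *)

From mathcomp Require Import all_boot all_order all_algebra.
Set Implicit Arguments. Unset Strict Implicit. Unset Printing Implicit Defensive.
Import GRing.Theory Num.Theory.

Definition simple_graph (V : finType) (e : rel V) : Prop :=
  symmetric e /\ irreflexive e.

Definition deg (V : finType) (e : rel V) (v : V) : nat := #|[set w | e v w]|.

Definition edges (V : finType) (e : rel V) : {set {set V}} :=
  [set [set u; v] | u in V, v in V & e u v].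

Definition connected_graph (V : finType) (e : rel V) : Prop :=
  forall u v : V, connect e u v.

Definition is_tree (V : finType) (e : rel V) : Prop :=
  simple_graph e /\ connected_graph e /\ #|edges e| = #|V| - 1.

Definition max_degree_eq (V : finType) (e : rel V) (k : nat) : Prop :=
  (forall v, deg e v <= k) /\ exists v, deg e v = k.

Local Open Scope ring_scope.

(* For an edge
   E = {u, v} (a 2-element set) the product over its elements is exactly
   (deg u + lambda)(deg v + lambda). *)
Definition GRM (R : comRingType) (V : finType) (e : rel V) (lambda : R) : R :=
  \sum_(E in edges e) \prod_(u in E) ((deg e u)%:R + lambda).

(* All degrees lie in {1, 2, 3}, so each edge contributes (d u - 2)(d v - 2) in
   {-1, 0, 1} and GRM_{-2} = m33 - m13, where m_ij counts the edges joining
   degrees i and j; m11 = 0 since two adjacent leaves would form a component.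
   With n_i vertices of degree i, the handshake lemma for a tree gives
   n1 = n3 + 2, the leaves give m13 <= n1, and the 3 n3 edge ends at vertices
   of degree 3 give 3 n3 <= m13 + 2 n2 + 2 m33.  Hence
   m13 - 2 <= n3 <= n2 + m33 + 1, so 3 (m13 - m33 - 2) <= 2 n3 + n2 + 1 = n - 1. *)
From mathcomp Require Import all_boot all_order all_algebra zify.
Import GRing.Theory.
Set Implicit Arguments. Unset Strict Implicit. Unset Printing Implicit Defensive.

Lemma eq_set2 (T : finType) (a b u v : T) : a != b -> u != v ->
  ([set a; b] == [set u; v]) = ((a, b) == (u, v)) || ((a, b) == (v, u)).
Proof.
move=> ab uv; apply/idP/idP; last by case/orP=> /eqP[-> ->]; rewrite // setUC.
move/eqP=> Eab; have /set2P ha : a \in [set u; v] by rewrite -Eab set21.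
have /set2P hb : b \in [set u; v] by rewrite -Eab set22.
by case: ha hb ab => -> [] ->; rewrite ?eqxx ?orbT.
Qed.

Section Darts.
Variables (V : finType) (e : rel V).
Hypotheses (e_sym : symmetric e) (e_irr : irreflexive e).

Lemma edges_dart_sum (R : comPzSemiRingType) (h : V -> R) :
  ((\sum_(E in edges e) \prod_(u in E) h u) *+ 2 =
   \sum_v \sum_(w | e v w) h v * h w)%R.
Proof.
rewrite pair_big_dep /= (partition_big (fun p : V * V => [set p.1; p.2])
  (mem (edges e))) /=; last first.
  by move=> [a b] eab; apply/imset2P; exists a b; rewrite ?inE.
rewrite -sumrMnl; apply: eq_bigr => E /imset2P[u v _].
rewrite inE => /andP[_ euv] ->.
have neq x y : e x y -> x != y by apply: contraTneq => ->; rewrite e_irr.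
rewrite (eq_bigl (pred2 (u, v) (v, u))); last first.
  move=> [a b] /=; case eab: (e a b); last first.
    by apply/esym/norP; split; apply: contraFneq eab => -[-> ->]; rewrite // e_sym.
  by rewrite eq_set2 ?neq.
have vu_uv : (v, u) != (u, v) by rewrite xpair_eqE negb_and neq // e_sym.
rewrite (bigD1 (u, v)) /= ?eqxx // (big_pred1 (v, u)) /=; last first.
  by move=> p; case: eqP => [->|_] /=; rewrite ?andbT // eq_sym (negbTE vu_uv).
by rewrite big_setU1 ?big_set1 ?inE ?neq //= [(h v * h u)%R]mulrC mulr2n.
Qed.

Lemma sum_deg : (\sum_v deg e v = 2 * #|edges e|)%N.
Proof.
transitivity ((\sum_(E in edges e) \prod_(u in E) (1 : nat)) *+ 2)%R.
  rewrite edges_dart_sum; apply: eq_bigr => v _.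
  by rewrite /deg -sum1dep_card; apply: eq_bigr => w _; rewrite mulr1.
rewrite (eq_bigr (fun _ => 1%N)) => [|E _]; last exact: big1_eq.
by rewrite sum1_card -mulr_natr natn mulnC.
Qed.
End Darts.

Lemma sum_nat_of_bool (T : finType) (P : pred T) :
  (\sum_x (P x : nat) = #|[set x | P x]|)%N.
Proof.
by rewrite -sum1dep_card [RHS]big_mkcond; apply: eq_bigr => x _; case: (P x).
Qed.

Section DegreeCounts.
Variables (V : finType) (e : rel V).

Definition ndarts (i j : nat) : nat :=
  \sum_v \sum_w [&& e v w, deg e v == i & deg e w == j].

Definition nverts (i : nat) : nat := #|[set v | deg e v == i]|.

Lemma ndarts_sym : symmetric e -> forall i j, ndarts i j = ndarts j i.
Proof.
move=> e_sym i j; rewrite /ndarts exchange_big; apply: eq_bigr => v _.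
apply: eq_bigr => w _; rewrite e_sym.
by case: (e v w); case: (deg e v == j); case: (deg e w == i).
Qed.

Hypothesis deg_range : forall v, (1 <= deg e v <= 3)%N.

Lemma deg_cases v : deg e v = 1%N \/ deg e v = 2%N \/ deg e v = 3%N.
Proof. by have := deg_range v; lia. Qed.

Lemma ndarts_row i : (ndarts i 1 + ndarts i 2 + ndarts i 3 = i * nverts i)%N.
Proof.
rewrite /ndarts -!big_split /nverts -sum_nat_of_bool big_distrr /=.
apply: eq_bigr => v _; rewrite -!big_split /=.
transitivity (\sum_w ((deg e v == i) && e v w) : nat)%N.
  apply: eq_bigr => w _.
  by case: (deg_cases w) => [->|[->|->]]; case: (e v w); case: (deg e v == i).
case: (deg e v =P i) => [<-|_]; last by rewrite muln0 big1.
by rewrite sum_nat_of_bool muln1.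
Qed.

Lemma card_nverts : (#|V| = nverts 1 + nverts 2 + nverts 3)%N.
Proof.
rewrite /nverts -!sum_nat_of_bool -!big_split -sum1_card.
by apply: eq_bigr => v _; case: (deg_cases v) => [->|[->|->]].
Qed.

Lemma sum_deg_nverts :
  (\sum_v deg e v = nverts 1 + 2 * nverts 2 + 3 * nverts 3)%N.
Proof.
rewrite /nverts -!sum_nat_of_bool !big_distrr -!big_split.
by apply: eq_bigr => v _; case: (deg_cases v) => [->|[->|->]].
Qed.

Lemma GRM_ndarts : symmetric e -> irreflexive e ->
  (GRM e (-2 : int) *+ 2 =
   (ndarts 1 1 + ndarts 3 3)%:R - (ndarts 1 3 + ndarts 3 1)%:R)%R.
Proof.
move=> e_sym e_irr; rewrite /GRM edges_dart_sum // /ndarts.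
rewrite !natrD !natr_sum -!big_split -sumrB; apply: eq_bigr => v _.
rewrite big_mkcond !natr_sum -!big_split -sumrB; apply: eq_bigr => w _.
case: (e v w) => //=.
by case: (deg_cases v) => [->|[->|->]]; case: (deg_cases w) => [->|[->|->]].
Qed.
End DegreeCounts.

Section Connected.
Variables (V : finType) (e : rel V).
Hypotheses (e_sym : symmetric e) (e_conn : connected_graph e).

Lemma deg_gt0 v : (1 < #|V|)%N -> (0 < deg e v)%N.
Proof.
move=> V_gt1; have /card_gt0P[w] : (0 < #|[set~ v]|)%N by rewrite cardsC1; lia.
rewrite !inE => wv; case/connectP: (e_conn v w) => -[|x p] /=.
  by move=> _ wE; rewrite wE eqxx in wv.
by case/andP=> evx _ _; apply/card_gt0P; exists x; rewrite inE.
Qed.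

Lemma leaf_nbr_uniq x y z : deg e x = 1%N -> e x y -> e x z -> z = y.
Proof.
move=> dx exy exz; have /card_le1_eqP : (#|[set w | e x w]| <= 1)%N.
  by rewrite -/(deg e x) dx.
by apply; rewrite inE.
Qed.

Lemma leaves_nonadjacent u v :
  (2 < #|V|)%N -> deg e u = 1%N -> deg e v = 1%N -> ~~ e u v.
Proof.
move=> V_gt2 du dv; apply/negP => euv; have evu : e v u by rewrite e_sym.
have uv_closed : closed e (mem [set u; v]).
  apply: intro_closed; first exact: sym_connect_sym.
  move=> x y exy /set2P[] xE; subst x.
    by rewrite (leaf_nbr_uniq du euv exy) set22.
  by rewrite (leaf_nbr_uniq dv evu exy) set21.
have /card_gt0P[w] : (0 < #|~: [set u; v]|)%N.
  by have := cardsC [set u; v]; rewrite cards2; case: (u != v); lia.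
rewrite inE => w_out; move: (closed_connect uv_closed (e_conn u w)).
by rewrite /= set21 (negbTE w_out).
Qed.

Lemma ndarts11_eq0 : (2 < #|V|)%N -> ndarts e 1 1 = 0%N.
Proof.
move=> V_gt2; apply: big1 => v _; apply: big1 => w _.
case: and3P => // -[evw /eqP dv /eqP dw].
by rewrite (negbTE (leaves_nonadjacent V_gt2 dv dw)) in evw.
Qed.
End Connected.

Theorem theorem3p2 (V : finType) (e : rel V) :
  is_tree e -> max_degree_eq e 3 -> (7 <= #|V|)%N ->
  (GRM e (-2 : int) >= - ((#|V| - 1) %/ 3)%:Z - 2)%R.
Proof.
move=> [[e_sym e_irr] [e_conn card_edges]] [deg_le3 _] V_ge7.
have deg_range v : (1 <= deg e v <= 3)%N by rewrite deg_le3 andbT deg_gt0 //; lia.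
have GRM2 := GRM_ndarts deg_range e_sym e_irr.
have no_leaf_edge : ndarts e 1 1 = 0%N by apply: ndarts11_eq0 => //; lia.
have row1 := ndarts_row deg_range 1; have row2 := ndarts_row deg_range 2.
have row3 := ndarts_row deg_range 3.
have sym12 := ndarts_sym e_sym 1 2; have sym13 := ndarts_sym e_sym 1 3.
have sym23 := ndarts_sym e_sym 2 3.
have card_V := card_nverts deg_range; have sum_deg_V := sum_deg_nverts deg_range.
have handshake := sum_deg e_sym e_irr.
lia.
Qed.
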